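(* Let $d\ge2$ and let $Q$ be a qplex. Then the preservation group $\mathcal{G}(Q)$ is a group under matrix multiplication, and it is the symmetry group of $Q$: for every $R\in\mathcal{G}(Q)$ the map $q\mapsto Rq$ is a distance-preserving bijection of $Q$ onto itself, and conversely every distance-preserving bijection $f:Q\to Q$ (with respect to the Euclidean distance) is of the form $f(q)=Rq$ for some $R\in\mathcal{G}(Q)$.
   Context: Fix an integer $d\ge 2$. $\langle\cdot,\cdot\rangle$ is the standard inner product on $\mathbb{R}^{d^2}$, $\|\cdot\|$ the Euclidean norm. $\Delta=\{p\in\mathbb{R}^{d^2}: p(i)\ge0,\ \sum_ip(i)=1\}$; $H=\{u\in\mathbb{R}^{d^2}:\sum_i u(i)=1\}$; $c=(1/d^2,\dots,1/d^2)$. For $A\subseteq H$ the polar is $A^*=\{u\in H:\langle u,v\rangle\ge\frac{1}{d(d+1)}\ \forall v\in A\}$. Out-ball $B_{\rm o}=\{u\in H:\|u-c\|\le r_{\rm o}\}$, $r_{\rm o}^2=\frac{d-1}{d^2(d+1)}$. A qplex is a set $Q\subseteq\Delta\cap B_{\rm o}$ with $Q^*=Q$. A measurement (with $d^2$ outcomes) is an array of reals $r(i|j)\ge0$ with $\sum_i r(i|j)=1$ for every $j$. For $q\in Q$, $q_r(i)=\sum_j\big[(d+1)q(j)-\frac1d\big]r(i|j)$ and $Q_r=\{q_r:q\in Q\}$; the measurement is $Q$-preserving if $Q_r=Q$. Its stretched measurement matrix is $R_{ij}=(d+1)r(i|j)-\frac1d\sum_k r(i|k)$, so that $q_r=Rq$.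 The preservation group $\mathcal{G}(Q)$ is the set of stretched measurement matrices of $Q$-preserving measurements. *)

(* Real numbers are modelled by an arbitrary real closed field R. *)
From HB Require Import structures.
From mathcomp Require Import all_boot all_order all_algebra.
Set Implicit Arguments. Unset Strict Implicit. Unset Printing Implicit Defensive.
Import Order.TTheory GRing.Theory Num.Theory.
Local Open Scope ring_scope.

Section QplexDefs.
Variables (R : rcfType) (d : nat).
Local Notation N := (d ^ 2)%N.
Local Notation vec := 'cV[R]_N.

Definition ip (u v : vec) : R := \sum_(i < N) u i 0 * v i 0.
Definition vnorm (u : vec) : R := Num.sqrt (ip u u).

Definition inH (u : vec) : Prop := \sum_(i < N) u i 0 = 1.
Definition inSimplex (u : vec) : Prop := (forall i, 0 <= u i 0) /\ inH u.
Definition cvec : vec := const_mx (1 / (N%:R)).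
Definition r_out : R := Num.sqrt ((d%:R - 1) / (d%:R ^+ 2 * (d%:R + 1))).
Definition inOutBall (u : vec) : Prop := inH u /\ vnorm (u - cvec) <= r_out.

Definition polar (A : vec -> Prop) (u : vec) : Prop :=
  inH u /\ forall v, A v -> 1 / (d%:R * (d%:R + 1)) <= ip u v.

Definition qplex (Q : vec -> Prop) : Prop :=
  (forall q, Q q -> inSimplex q /\ inOutBall q) /\
  (forall u, polar Q u <-> Q u).

(* r i j stands for r(i|j) *)
Definition measurement (r : 'M[R]_N) : Prop :=
  (forall i j, 0 <= r i j) /\ (forall j, \sum_(i < N) r i j = 1).

Definition qr (r : 'M[R]_N) (q : vec) : vec :=
  \col_i \sum_(j < N) ((d%:R + 1) * q j 0 - 1 / d%:R) * r i j.

Definition Q_preserving (Q : vec -> Prop) (r : 'M[R]_N) : Prop :=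
  measurement r /\
  (forall q, Q q -> Q (qr r q)) /\
  (forall p, Q p -> exists2 q, Q q & qr r q = p).

Definition stretched (r : 'M[R]_N) : 'M[R]_N :=
  \matrix_(i, j) ((d%:R + 1) * r i j - 1 / d%:R * \sum_(k < N) r i k).

Definition inPresGroup (Q : vec -> Prop) (M : 'M[R]_N) : Prop :=
  exists2 r, Q_preserving Q r & M = stretched r.

End QplexDefs.

(* Let J be the all-ones matrix.  Stretching is right multiplication by
   V = (d+1) I - J/d, whose inverse U has columns u_j lying in every qplex: they
   pass the polar test because points of a qplex are nonnegative.  On the
   hyperplane H a measurement acts as q_r = (r V) q, so M = r V lies in G(Q)
   exactly when q |-> M q maps Q onto Q, and then M U has its columns in Q.
   The out-ball makes X = M P, with P = I - J/d^2, satisfy |X|_F^2 <= d^2 - 1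
   = tr P; so does the centred inverse of M, and equality in Cauchy-Schwarz
   gives X^T X = P, i.e. M preserves lengths of differences of points of H.
   Conversely every q in H is the affine combination
   sum_j ((d+1) q_j - 1/d) u_j, which an isometry respects, so f q = M q where
   M stretches the matrix with columns f u_j. *)

From HB Require Import structures.
From mathcomp Require Import all_boot all_order all_algebra.
From mathcomp Require Import ring lra.
Import Order.TTheory GRing.Theory Num.Theory.
Local Open Scope ring_scope.
Set Implicit Arguments. Unset Strict Implicit. Unset Printing Implicit Defensive.

Section OnesMatrix.
Variables (R : comNzRingType) (n : nat).

Definition ones_mx : 'M[R]_n := const_mx 1.
Definition IJmx (a b : R) : 'M[R]_n := a%:M + b *: ones_mx.

Lemma IJmxE a b i j : IJmx a b i j = a *+ (i == j) + b.
Proof. by rewrite !mxE mulr1. Qed.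

Lemma mulmx_onesE m (A : 'M[R]_(m, n)) i j : (A *m ones_mx) i j = \sum_k A i k.
Proof. by rewrite !mxE; apply: eq_bigr => k _; rewrite mxE mulr1. Qed.

Lemma ones_mulmxE m (A : 'M[R]_(n, m)) i j : (ones_mx *m A) i j = \sum_k A k j.
Proof. by rewrite !mxE; apply: eq_bigr => k _; rewrite mxE mul1r. Qed.

Lemma ones_mx_sqr : ones_mx *m ones_mx = n%:R *: ones_mx.
Proof.
apply/matrixP => i j; rewrite !mxE.
by under eq_bigr do rewrite !mxE mulr1; rewrite sumr_const card_ord mulr1.
Qed.

Lemma mulmx_IJmx m (A : 'M[R]_(m, n)) a b :
  A *m IJmx a b = a *: A + b *: (A *m ones_mx).
Proof. by rewrite mulmxDr mul_mx_scalar scalemxAr. Qed.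

Lemma IJmx_mulmx m (A : 'M[R]_(n, m)) a b :
  IJmx a b *m A = a *: A + b *: (ones_mx *m A).
Proof. by rewrite mulmxDl mul_scalar_mx scalemxAl. Qed.

Lemma mulmx_IJmxE m (A : 'M[R]_(m, n)) a b i j :
  (A *m IJmx a b) i j = a * A i j + b * \sum_k A i k.
Proof. by rewrite -(mulmx_onesE _ i j) mulmx_IJmx !mxE. Qed.

Lemma IJmx_mulmxE m (A : 'M[R]_(n, m)) a b i j :
  (IJmx a b *m A) i j = a * A i j + b * \sum_k A k j.
Proof. by rewrite -(ones_mulmxE _ i j) IJmx_mulmx !mxE. Qed.

Lemma ones_mulIJmx a b : ones_mx *m IJmx a b = (a + b * n%:R) *: ones_mx.
Proof. by rewrite mulmx_IJmx ones_mx_sqr scalerA scalerDl. Qed.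

Lemma IJmxM a b a' b' :
  IJmx a b *m IJmx a' b' = IJmx (a * a') (a * b' + b * a' + b * b' * n%:R).
Proof.
rewrite IJmx_mulmx ones_mulIJmx; apply/matrixP => i j; rewrite !mxE.
by case: (i == j); rewrite ?mulr1n ?mulr0n; ring.
Qed.

Lemma mxtrace_IJmx a b : \tr (IJmx a b) = (a + b) * n%:R.
Proof.
rewrite mxtraceD mxtrace_scalar mxtraceZ mulrDl mulr_natr; congr (_ + _ * _).
by rewrite /mxtrace; under eq_bigr do rewrite mxE; rewrite sumr_const card_ord.
Qed.

Lemma IJmx10 : IJmx 1 0 = 1%:M.
Proof. by rewrite /IJmx scale0r addr0. Qed.

End OnesMatrix.

Section Frobenius.
Variables (R : realFieldType) (n : nat).

Definition fnorm2 (A : 'M[R]_n) : R := \tr (A^T *m A).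

Lemma fnorm2E A : fnorm2 A = \sum_j \sum_i A i j ^+ 2.
Proof.
apply: eq_bigr => j _; rewrite mxE.
by apply: eq_bigr => i _; rewrite mxE expr2.
Qed.

Lemma fnorm2_le0 A : fnorm2 A <= 0 -> A = 0.
Proof.
rewrite fnorm2E => A_le0.
have col_ge0 j : 0 <= \sum_i A i j ^+ 2 by apply: sumr_ge0 => i _; exact: sqr_ge0.
have /psumr_eq0P sum0 : \sum_j \sum_i A i j ^+ 2 = 0.
  by apply/le_anti; rewrite A_le0 sumr_ge0.
apply/matrixP => i j; rewrite mxE.
have /psumr_eq0P entry0 := sum0 (fun j _ => col_ge0 j) j isT.
by apply/eqP; rewrite -sqrf_eq0 entry0 // => k _; exact: sqr_ge0.
Qed.

(* Equality case of Cauchy-Schwarz for the trace inner product. *)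
Lemma fnorm2_trace_eq X Y m :
  fnorm2 X <= m -> fnorm2 Y <= m -> \tr (X *m Y) = m -> Y = X^T.
Proof.
move=> X_le Y_le trXY.
have dist : fnorm2 (X - Y^T) = fnorm2 X + fnorm2 Y - 2 * m.
  have trD : (X - Y^T)^T = X^T - Y by rewrite linearB /= trmxK.
  rewrite /fnorm2 trD mulmxBl !mulmxBr !raddfB /=.
  rewrite -trmx_mul mxtrace_tr [\tr (Y *m Y^T)]mxtrace_mulC.
  rewrite [\tr (Y *m X)]mxtrace_mulC trXY; ring.
have /eqP : X - Y^T = 0 by apply: fnorm2_le0; rewrite dist; lra.
by rewrite subr_eq0 => /eqP ->; rewrite trmxK.
Qed.

Lemma trmx_mul_proj (X P : 'M[R]_n) :
  X *m X^T = P -> P *m X = X -> X *m P = X -> X^T *m X = P.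
Proof.
move=> XXt PX XP.
have Psym : P^T = P by rewrite -XXt trmx_mul trmxK.
have PP : P *m P = P by rewrite -{2}XXt mulmxA PX.
have trXtX : \tr (X^T *m X) = \tr P by rewrite mxtrace_mulC XXt.
have XtX2 : X^T *m X *m (X^T *m X) = X^T *m X.
  by rewrite mulmxA -(mulmxA _ X) XXt -mulmxA PX.
apply/eqP; rewrite -subr_eq0; apply/eqP; apply: fnorm2_le0.
have symD : (X^T *m X - P)^T = X^T *m X - P.
  by rewrite linearB /= trmx_mul trmxK Psym.
rewrite /fnorm2 symD mulmxBl !mulmxBr !raddfB /=.
rewrite XtX2 PP -mulmxA XP [\tr (P *m _)]mxtrace_mulC -mulmxA XP trXtX.
by rewrite !subrr addr0.
Qed.

End Frobenius.

Lemma sum_sqr_dev_mean_le (F : realFieldType) n (x : 'I_n -> F) b :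
  \sum_j (x j - (\sum_k x k) / n%:R) ^+ 2 <= \sum_j (x j - b) ^+ 2.
Proof.
case: n x => [|n'] x; first by rewrite !big_ord0.
have expand c : \sum_j (x j - c) ^+ 2 =
    \sum_j x j ^+ 2 - (\sum_j x j) * c *+ 2 + c ^+ 2 * n'.+1%:R.
  under eq_bigr do rewrite sqrrB.
  by rewrite big_split /= sumrB sumr_const card_ord sumrMnl -mulr_suml mulr_natr.
rewrite !expand -subr_ge0; set S := \sum_k x k.
rewrite [X in _ <= X](_ : _ = n'.+1%:R * (S / n'.+1%:R - b) ^+ 2).
  by rewrite mulr_ge0 ?sqr_ge0.
by field; rewrite addrC natr1 pnatr_eq0.
Qed.

Lemma col_mulmx (R : pzSemiRingType) m n p (A : 'M[R]_(m, n)) (B : 'M[R]_(n, p)) j :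
  col j (A *m B) = A *m col j B.
Proof. by rewrite !colE mulmxA. Qed.

Section InnerProduct.
Variables (R : rcfType) (d : nat).
Local Notation vec := 'cV[R]_(d ^ 2).

Lemma ipE (u v : vec) : ip u v = (u^T *m v) 0 0.
Proof. by rewrite /ip !mxE; apply: eq_bigr => i _; rewrite mxE. Qed.

Lemma ipC (u v : vec) : ip u v = ip v u.
Proof. by apply: eq_bigr => i _; rewrite mulrC. Qed.

Lemma ipBl (u w v : vec) : ip (u - w) v = ip u v - ip w v.
Proof. by rewrite /ip -sumrB; apply: eq_bigr => i _; rewrite !mxE mulrBl. Qed.

Lemma ipBr (u w v : vec) : ip v (u - w) = ip v u - ip v w.
Proof. by rewrite ipC ipBl ipC [ip w v]ipC. Qed.

Lemma ipZl a (u v : vec) : ip (a *: u) v = a * ip u v.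
Proof. by rewrite /ip mulr_sumr; apply: eq_bigr => i _; rewrite mxE mulrA. Qed.

Lemma ip_suml (I : finType) (F : I -> vec) v : ip (\sum_j F j) v = \sum_j ip (F j) v.
Proof.
rewrite /ip exchange_big /=; apply: eq_bigr => i _.
by rewrite summxE mulr_suml.
Qed.

Lemma ip0l (v : vec) : ip 0 v = 0.
Proof. by rewrite /ip big1 // => i _; rewrite mxE mul0r. Qed.

Lemma ip_ge0 (u : vec) : 0 <= ip u u.
Proof. by apply: sumr_ge0 => i _; rewrite -expr2 sqr_ge0. Qed.

Lemma ip_eq0 (u : vec) : ip u u = 0 -> u = 0.
Proof.
move=> uu0; apply/colP => i; rewrite mxE; apply/eqP.
have sq_ge0 k : true -> 0 <= u k 0 * u k 0 by rewrite -expr2 sqr_ge0.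
by rewrite -sqrf_eq0 expr2 (psumr_eq0P sq_ge0 uu0).
Qed.

Lemma ip_vnorm (u : vec) : ip u u = vnorm u ^+ 2.
Proof. by rewrite sqr_sqrtr // ip_ge0. Qed.

Lemma ip_polarization (x y : vec) :
  ip x y = (ip x x + ip y y - ip (x - y) (x - y)) / 2.
Proof. by rewrite !ipBl !ipBr [ip y x]ipC; field. Qed.

(* The Gram matrices of the families q - u_j and f q - f u_j agree, so the
   vanishing of sum_j a_j (q - u_j) forces that of sum_j a_j (f q - f u_j). *)
Lemma isometry_affine (S : vec -> Prop) (f : vec -> vec) (I : finType)
    (u : I -> vec) (a : I -> R) (q : vec) :
  (forall x y, S x -> S y -> vnorm (f x - f y) = vnorm (x - y)) ->
  S q -> (forall j, S (u j)) -> \sum_j a j = 1 -> q = \sum_j a j *: u j ->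
  f q = \sum_j a j *: f (u j).
Proof.
move=> f_iso Sq Su sum_a q_comb.
have ip_dist x y : S x -> S y -> ip (f x - f y) (f x - f y) = ip (x - y) (x - y).
  by move=> Sx Sy; rewrite !ip_vnorm f_iso.
pose w j := f q - f (u j); pose z j := q - u j.
have gram j k : ip (w j) (w k) = ip (z j) (z k).
  rewrite ip_polarization [RHS]ip_polarization.
  have -> : w j - w k = f (u k) - f (u j) by rewrite /w opprB addrC addrA subrK.
  have -> : z j - z k = u k - u j by rewrite /z opprB addrC addrA subrK.
  by rewrite !ip_dist.
have comb (g : I -> vec) (c : vec) : \sum_j a j *: (c - g j) = c - \sum_j a j *: g j.
  by under eq_bigr do rewrite scalerBr; rewrite sumrB -scaler_suml sum_a scale1r.
have ip_comb (v : I -> vec) : ip (\sum_j a j *: v j) (\sum_k a k *: v k) =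
    \sum_j \sum_k a j * a k * ip (v j) (v k).
  rewrite ip_suml; apply: eq_bigr => j _; rewrite ipZl ipC ip_suml mulr_sumr.
  by apply: eq_bigr => k _; rewrite ipZl ipC mulrA.
apply/eqP; rewrite -subr_eq0; apply/eqP/ip_eq0.
rewrite -comb ip_comb; under eq_bigr do under eq_bigr do rewrite gram.
by rewrite -ip_comb comb -q_comb subrr ip0l.
Qed.

End InnerProduct.

Section Qplex.
Variables (R : rcfType) (d : nat).
Hypothesis d_ge2 : (2 <= d)%N.
Variable Q : 'cV[R]_(d ^ 2) -> Prop.
Hypothesis Q_qplex : qplex Q.
Local Notation N := (d ^ 2)%N.
Local Notation dr := (d%:R : R).
Local Notation vec := 'cV[R]_N.
Local Notation ones_mx := (@ones_mx R N).
Local Notation IJmx := (@IJmx R N).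

Let dr_gt0 : 0 < dr. Proof. by rewrite ltr0n; case: d d_ge2. Qed.
Let dr_neq0 : dr != 0. Proof. exact: lt0r_neq0. Qed.
Let dr1_neq0 : dr + 1 != 0. Proof. by rewrite lt0r_neq0 // ltr_wpDr. Qed.
Let NrE : (N%:R : R) = dr ^+ 2. Proof. exact: natrX. Qed.

Ltac fld := rewrite ?NrE; field; by rewrite ?dr_neq0 ?dr1_neq0.

Definition stretch_mx : 'M[R]_N := IJmx (dr + 1) (- dr^-1).
Definition unstretch_mx : 'M[R]_N := IJmx (dr + 1)^-1 ((dr + 1)^-1 * dr^-1).
Definition center_mx : 'M[R]_N := IJmx 1 (- N%:R^-1).

Lemma stretchedE (t : 'M[R]_N) : stretched t = t *m stretch_mx.
Proof. by apply/matrixP => i j; rewrite mulmx_IJmxE !mxE; ring. Qed.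

Lemma unstretch_stretch : unstretch_mx *m stretch_mx = 1%:M.
Proof. by rewrite IJmxM -IJmx10; congr IJmx; fld. Qed.

Lemma stretch_unstretch : stretch_mx *m unstretch_mx = 1%:M.
Proof. by rewrite IJmxM -IJmx10; congr IJmx; fld. Qed.

Lemma stretchedK (t : 'M[R]_N) : stretched t *m unstretch_mx = t.
Proof. by rewrite stretchedE -mulmxA stretch_unstretch mulmx1. Qed.

Lemma unstretchedK (M : 'M[R]_N) : stretched (M *m unstretch_mx) = M.
Proof. by rewrite stretchedE -mulmxA unstretch_stretch mulmx1. Qed.

Lemma ones_mul_stretched (t : 'M[R]_N) :
  (forall j, \sum_i t i j = 1) -> ones_mx *m stretched t = ones_mx.
Proof.
move=> colsum; rewrite stretchedE mulmxA.
have -> : ones_mx *m t = ones_mx.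
  by apply/matrixP => i j; rewrite ones_mulmxE colsum mxE.
by rewrite ones_mulIJmx (_ : _ + _ = 1) ?scale1r //; fld.
Qed.

Lemma center_mx_idem : center_mx *m center_mx = center_mx.
Proof. by rewrite IJmxM; congr IJmx; fld. Qed.

Lemma ones_mul_center : ones_mx *m center_mx = 0.
Proof. by rewrite ones_mulIJmx mulNr mulVf ?subrr ?scale0r // NrE expf_neq0. Qed.

Lemma mxtrace_center : \tr center_mx = N%:R - 1.
Proof. by rewrite mxtrace_IJmx mulrDl mulNr mulVf ?mul1r // NrE expf_neq0. Qed.

Lemma stretch_center : stretch_mx *m center_mx = IJmx (dr + 1) (- ((dr + 1) / N%:R)).
Proof. by rewrite IJmxM; congr IJmx; fld. Qed.

Lemma center_mulmx_center (M : 'M[R]_N) :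
  ones_mx *m M = ones_mx -> center_mx *m M *m center_mx = M *m center_mx.
Proof.
move=> onesM; rewrite IJmx_mulmx scale1r onesM mulmxDl -scalemxAl.
by rewrite ones_mul_center scaler0 addr0.
Qed.

Lemma center_fix (v : vec) : \sum_k v k 0 = 0 -> center_mx *m v = v.
Proof. by move=> v0; apply/colP => i; rewrite IJmx_mulmxE v0 mulr0 addr0 mul1r. Qed.

Let Q_simplex q : Q q -> inSimplex q. Proof. by case/(proj1 Q_qplex). Qed.
Let Q_H q : Q q -> inH q. Proof. by case/Q_simplex. Qed.
Let Q_ball (q : vec) : Q q -> inOutBall q. Proof. by case/(proj1 Q_qplex). Qed.

Definition basis_pt j : vec := col j unstretch_mx.

Lemma ip_basis_pt j (v : vec) :
  inH v -> ip (basis_pt j) v = (dr + 1)^-1 * v j 0 + (dr + 1)^-1 * dr^-1.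
Proof.
move=> Hv; transitivity ((unstretch_mx *m v) j 0).
  by rewrite mxE; apply: eq_bigr => i _; rewrite mxE !IJmxE eq_sym.
by rewrite IJmx_mulmxE Hv mulr1.
Qed.

Lemma Q_basis_pt j : Q (basis_pt j).
Proof.
apply/(proj2 Q_qplex); split.
  rewrite /inH; under eq_bigr do rewrite mxE.
  by rewrite -(ones_mulmxE _ j) ones_mulIJmx !mxE mulr1; fld.
move=> v /Q_simplex [v_ge0 Hv]; rewrite ip_basis_pt //.
rewrite (_ : 1 / _ = (dr + 1)^-1 * dr^-1); last by fld.
by rewrite lerDr mulr_ge0 // invr_ge0 ltW // ltr_wpDr.
Qed.

Definition qcoef (q : vec) j := (dr + 1) * q j 0 - 1 / dr.

Lemma qr_cols (t : 'M[R]_N) q : qr t q = \sum_j qcoef q j *: col j t.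
Proof. by apply/colP => i; rewrite !mxE summxE; apply: eq_bigr => j _; rewrite !mxE. Qed.

Lemma sum_qcoef q : inH q -> \sum_j qcoef q j = 1.
Proof.
move=> Hq; rewrite sumrB -mulr_sumr Hq sumr_const card_ord -mulr_natr mulr1; fld.
Qed.

Lemma qr_stretched (t : 'M[R]_N) q : inH q -> qr t q = stretched t *m q.
Proof.
move=> Hq; rewrite stretchedE -mulmxA; apply/colP => i; rewrite !mxE.
by apply: eq_bigr => j _; rewrite IJmx_mulmxE Hq mulr1 mulrC; congr (_ * _); fld.
Qed.

Lemma measurement_cols (t : 'M[R]_N) : (forall j, Q (col j t)) -> measurement t.
Proof.
move=> Qt; split=> [i j | j].
  by case: (Q_simplex (Qt j)) => /(_ i); rewrite mxE.
case: (Q_simplex (Qt j)) => _ <-.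
by apply: eq_bigr => i _; rewrite mxE.
Qed.

Lemma inPresGroupP M : inPresGroup Q M <->
  (forall q, Q q -> Q (M *m q)) /\ (forall p, Q p -> exists2 q, Q q & M *m q = p).
Proof.
split=> [[r [_ [r_in r_onto]] ->] | [M_in M_onto]].
  split=> [q Qq | p /r_onto [q Qq <-]]; have Hq := Q_H Qq.
    by rewrite -qr_stretched //; apply: r_in.
  by exists q; rewrite // qr_stretched.
have cols j : Q (col j (M *m unstretch_mx)) by rewrite col_mulmx; apply/M_in/Q_basis_pt.
exists (M *m unstretch_mx); last by rewrite unstretchedK.
split; first exact: measurement_cols.
split=> [q Qq | p /M_onto [q Qq <-]]; have Hq := Q_H Qq.
  by rewrite qr_stretched // unstretchedK; apply: M_in.
by exists q; rewrite // qr_stretched // unstretchedK.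
Qed.

Lemma outball_sum_sqr (q : vec) : inOutBall q ->
  \sum_i (q i 0 - 1 / N%:R) ^+ 2 <= (dr - 1) / (dr ^+ 2 * (dr + 1)).
Proof.
have -> : \sum_i (q i 0 - 1 / N%:R) ^+ 2 = ip (q - cvec R d) (q - cvec R d).
  by apply: eq_bigr => i _; rewrite !mxE expr2.
case=> _; rewrite /vnorm /r_out ler_sqrt // divr_ge0 ?mulr_ge0 ?sqr_ge0 //.
  by rewrite subr_ge0 ler1n ltnW.
by rewrite ltW // ltr_wpDr.
Qed.

(* Every column of t lies in the out-ball around c; centring the rows, which is
   what right multiplication by the centring matrix does, only lowers the
   total squared spread. *)
Lemma fnorm2_stretched_center (t : 'M[R]_N) :
  (forall j, Q (col j t)) -> fnorm2 (stretched t *m center_mx) <= N%:R - 1.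
Proof.
move=> Qt; rewrite stretchedE -mulmxA stretch_center fnorm2E.
pose rho := (dr - 1) / (dr ^+ 2 * (dr + 1)).
pose dev i j := t i j - (\sum_k t i k) / N%:R.
have -> : \sum_j \sum_i (t *m IJmx (dr + 1) (- ((dr + 1) / N%:R))) i j ^+ 2 =
    (dr + 1) ^+ 2 * \sum_j \sum_i dev i j ^+ 2.
  rewrite mulr_sumr; apply: eq_bigr => j _; rewrite mulr_sumr.
  by apply: eq_bigr => i _; rewrite mulmx_IJmxE /dev; ring.
apply: (@le_trans _ _ ((dr + 1) ^+ 2 * \sum_(j < N) rho)).
  rewrite ler_wpM2l ?sqr_ge0 // exchange_big /=.
  apply: le_trans
    (ler_sum _ (fun i _ => sum_sqr_dev_mean_le (fun j => t i j) (1 / N%:R))) _.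
  rewrite exchange_big /=; apply: ler_sum => j _.
  rewrite (eq_bigr (fun i => (col j t i 0 - 1 / N%:R) ^+ 2)) => [|i _].
    exact/outball_sum_sqr/Q_ball.
  by rewrite mxE.
rewrite sumr_const card_ord -[rho *+ _]mulr_natr le_eqVlt.
by rewrite (_ : _ * _ = N%:R - 1) ?eqxx // /rho; fld.
Qed.

Lemma presGroup_rinv M : inPresGroup Q M ->
  exists2 t : 'M[R]_N, (forall j, Q (col j t)) & M *m stretched t = 1%:M.
Proof.
case/inPresGroupP => _ M_onto.
have /fin_all_exists [pre preP] : forall j, exists q, Q q /\ M *m q = basis_pt j.
  by move=> j; have [q Qq Mq] := M_onto _ (Q_basis_pt j); exists q.
pose t := \matrix_(i, j) pre j i 0.
have col_t j : col j t = pre j by apply/colP => i; rewrite !mxE.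
exists t => [j|]; first by rewrite col_t; case: (preP j).
have Mt : M *m t = unstretch_mx.
  apply/matrixP => i j; have /colP/(_ i) := (preP j).2.
  by rewrite -col_t -col_mulmx !mxE.
by rewrite stretchedE mulmxA Mt unstretch_stretch.
Qed.

Lemma presGroup_inv M : inPresGroup Q M ->
  exists2 B, inPresGroup Q B & M *m B = 1%:M /\ B *m M = 1%:M.
Proof.
move=> GM; have [t Qt Mt] := presGroup_rinv GM.
have tM := mulmx1C Mt; exists (stretched t) => //.
have [M_in M_onto] := (inPresGroupP M).1 GM.
apply/inPresGroupP; split=> [q /M_onto [p Qp <-] | p Qp].
  by rewrite mulmxA tM mul1mx.
by exists (M *m p); [exact: M_in | rewrite mulmxA tM mul1mx].
Qed.

(* With X = M P and Y = M^-1 P both of squared Frobenius norm at most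
   tr P = d^2 - 1 and X Y = P, Cauchy-Schwarz forces Y = X^T and X^T X = P. *)
Lemma presGroup_isometry M : inPresGroup Q M ->
  forall p q, Q p -> Q q -> vnorm (M *m p - M *m q) = vnorm (p - q).
Proof.
move=> GM; have [t Qt Mt] := presGroup_rinv GM.
have QMU j : Q (col j (M *m unstretch_mx)).
  by rewrite col_mulmx; apply: ((inPresGroupP M).1 GM).1; exact: Q_basis_pt.
have onesM : ones_mx *m M = ones_mx.
  rewrite -{1}(unstretchedK M) ones_mul_stretched => // j.
  by case: (measurement_cols QMU).
have onest : ones_mx *m stretched t = ones_mx.
  by apply: ones_mul_stretched => j; case: (measurement_cols Qt).
set X := M *m center_mx; set Y := stretched t *m center_mx.
have XY : X *m Y = center_mx.
  by rewrite /X /Y mulmxA -(mulmxA M) -mulmxA center_mulmx_center // mulmxA Mt mul1mx.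
have Y_trX : Y = X^T.
  apply: (@fnorm2_trace_eq _ _ X Y (N%:R - 1)); rewrite ?XY ?mxtrace_center //.
    by rewrite /X -{1}(unstretchedK M); exact: fnorm2_stretched_center.
  exact: fnorm2_stretched_center.
have XtX : X^T *m X = center_mx.
  apply: trmx_mul_proj; first by rewrite -Y_trX.
    by rewrite /X mulmxA center_mulmx_center.
  by rewrite /X -mulmxA center_mx_idem.
move=> p q Qp Qq; set v := p - q.
have Pv : center_mx *m v = v.
  apply: center_fix; under eq_bigr do rewrite !mxE.
  by rewrite sumrB (Q_H Qp) (Q_H Qq) subrr.
rewrite /vnorm -mulmxBr -/v -{1 2}Pv mulmxA -/X !ipE trmx_mul mulmxA.
by rewrite -(mulmxA _ X^T) XtX -mulmxA Pv.
Qed.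

Lemma isometry_stretched (f : vec -> vec) :
  (forall q, Q q -> Q (f q)) ->
  (forall p q, Q p -> Q q -> vnorm (f p - f q) = vnorm (p - q)) ->
  forall q, Q q -> f q = stretched (\matrix_(i, j) f (basis_pt j) i 0) *m q.
Proof.
move=> f_in f_iso q Qq; have Hq := Q_H Qq.
rewrite -qr_stretched // qr_cols.
rewrite (eq_bigr (fun j => qcoef q j *: f (basis_pt j))) => [|j _]; last first.
  by congr (_ *: _); apply/colP => i; rewrite !mxE.
apply: (isometry_affine f_iso) => //; [exact: Q_basis_pt | exact: sum_qcoef |].
by rewrite -qr_cols qr_stretched // -[unstretch_mx]mul1mx unstretchedK mul1mx.
Qed.

End Qplex.

Theorem mainTheorem13 (R : rcfType) (d : nat) (hd : (2 <= d)%N)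
  (Q : 'cV[R]_(d ^ 2) -> Prop) (hQ : qplex Q) :
  (inPresGroup Q 1%:M /\
   (forall A B, inPresGroup Q A -> inPresGroup Q B -> inPresGroup Q (A *m B)) /\
   (forall A, inPresGroup Q A ->
      exists2 B, inPresGroup Q B & A *m B = 1%:M /\ B *m A = 1%:M)) /\
  (forall M, inPresGroup Q M ->
     (forall q, Q q -> Q (M *m q)) /\
     (forall p q, Q p -> Q q -> M *m p = M *m q -> p = q) /\
     (forall p, Q p -> exists2 q, Q q & M *m q = p) /\
     (forall p q, Q p -> Q q -> vnorm (M *m p - M *m q) = vnorm (p - q))) /\
  (forall f : 'cV[R]_(d ^ 2) -> 'cV[R]_(d ^ 2),
     (forall q, Q q -> Q (f q)) ->
     (forall p q, Q p -> Q q -> f p = f q -> p = q) ->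
     (forall p, Q p -> exists2 q, Q q & f q = p) ->
     (forall p q, Q p -> Q q -> vnorm (f p - f q) = vnorm (p - q)) ->
     exists2 M, inPresGroup Q M & forall q, Q q -> f q = M *m q).
Proof.
have GP := inPresGroupP hd hQ.
split; [split; [|split] | split].
- by apply/GP; split=> [q|p]; rewrite ?mul1mx //; exists p; rewrite ?mul1mx.
- move=> A B /GP [A_in A_onto] /GP [B_in B_onto]; apply/GP; split=> [q Qq | p].
    by rewrite -mulmxA; apply/A_in/B_in.
  by case/A_onto => q /B_onto [r Qr <-] <-; exists r; rewrite ?mulmxA.
- exact: presGroup_inv.
- move=> M GM; have [M_in M_onto] := (GP M).1 GM.
  split=> //; split; last by split=> //; exact: presGroup_isometry.
  move=> p q _ _ Mpq; have [B _ [_ BM]] := presGroup_inv hd hQ GM.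
  by rewrite -[p]mul1mx -[q]mul1mx -BM -!mulmxA Mpq.
move=> f f_in _ f_onto f_iso.
have fM := isometry_stretched hd hQ f_in f_iso.
exists (stretched (\matrix_(i, j) f (@basis_pt R d j) i 0)) => //.
apply/GP; split=> [q Qq | p /f_onto [q Qq <-]]; first by rewrite -fM //; apply: f_in.
by exists q; rewrite // fM.
Qed.
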